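(* Let $(N,\langle\cdot,\cdot\rangle,\varphi)$ be a modified $H$-type group (see context), with $m=\dim\mathfrak v$. For all $e,e'\in\mathfrak v$ and $z,z'\in\mathfrak z$ the Ricci tensor satisfies $$\mathrm{Ric}(e,z)=0,\qquad \mathrm{Ric}(e,e')=-\tfrac{\xi}{2}\langle e,e'\rangle,\qquad \mathrm{Ric}(z,z')=\tfrac m4\langle z,z'\rangle_\varphi .$$
   Context: Let $N$ be a 2-step nilpotent real Lie group with Lie algebra $\mathfrak n$, Lie bracket $[\cdot,\cdot]$ and center $\mathfrak z$, endowed with a left-invariant pseudo-Riemannian metric $\langle\cdot,\cdot\rangle$ (identified with an inner product on $\mathfrak n$) for which $\mathfrak z$ is nondegenerate. Put $\mathfrak v=\mathfrak z^\perp$. For $z\in\mathfrak z$ define $j(z)\in\mathrm{End}(\mathfrak v)$ by $\langle [x,y],z\rangle=\langle y,j(z)x\rangle$ for all $x,y\in\mathfrak v$. Given a quadratic form $\varphi$ on $\mathfrak z$, $(N,\langle\cdot,\cdot\rangle,\varphi)$ is a modified $H$-type group if $j(z)^2=-\varphi(z)\,\mathrm{Id}_{\mathfrak v}$ for all $z\in\mathfrak z$ (equivalently $\langle j(z)x,j(z)y\rangle=\varphi(z)\langle x,y\rangle$). $\langle\cdot,\cdot\rangle_\varphi$ denotes the symmetric bilinear form on $\mathfrak z$ obtained by polarizing $\varphi$ (so $\langle z,z\rangle_\varphi=\varphi(z)$). Let $\{z_1,\dots,z_p\}$ be a pseudo-orthonormal basis of $\mathfrak z$ and set $\xi=\sum_{k=1}^p\langle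 z_k,z_k\rangle\,\varphi(z_k)$ (independent of the basis). $\mathrm{Ric}$ is the Ricci tensor of the Levi-Civita connection. *)

(* The Lie algebra n of N is modelled as 'rV[R]_n (R a realType,
   i.e. the real numbers), and all geometric objects (Levi-Civita connection,
   curvature, Ricci tensor) of the left-invariant metric are the standard
   algebraic ones on left-invariant vector fields (Koszul formula). *)
From mathcomp Require Import all_boot all_order all_algebra.
From mathcomp Require Import reals.
Set Implicit Arguments. Unset Strict Implicit. Unset Printing Implicit Defensive.
Import Order.TTheory GRing.Theory Num.Theory.
Local Open Scope ring_scope.

Definition ipform (R : realType) (n : nat) (G : 'M[R]_n) (x y : 'rV[R]_n) : R :=
  (x *m G *m y^T) 0 0.

Definition is_lie_bracket (R : realType) (n : nat)
    (br : 'rV[R]_n -> 'rV[R]_n -> 'rV[R]_n) : Prop :=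
  (forall (a : R) x y w, br (a *: x + y) w = a *: br x w + br y w) /\
  (forall x y, br x y = - br y x) /\
  (forall x y w, br x (br y w) + br y (br w x) + br w (br x y) = 0).

Definition two_step (R : realType) (n : nat)
    (br : 'rV[R]_n -> 'rV[R]_n -> 'rV[R]_n) : Prop :=
  (forall x y w, br (br x y) w = 0) /\ (exists x y, br x y != 0).

Definition inner_product (R : realType) (n : nat) (G : 'M[R]_n) : Prop :=
  G^T = G /\ G \in unitmx.

Definition center (R : realType) (n : nat)
    (br : 'rV[R]_n -> 'rV[R]_n -> 'rV[R]_n) (z : 'rV[R]_n) : Prop :=
  forall x, br z x = 0.

Definition vpart (R : realType) (n : nat)
    (br : 'rV[R]_n -> 'rV[R]_n -> 'rV[R]_n) (G : 'M[R]_n) (x : 'rV[R]_n) : Prop :=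
  forall z, center br z -> ipform G x z = 0.

Definition nondeg_on (R : realType) (n : nat) (S : 'rV[R]_n -> Prop) (G : 'M[R]_n) : Prop :=
  forall z, S z -> (forall z', S z' -> ipform G z z' = 0) -> z = 0.

Definition is_basis_of (R : realType) (n k : nat) (S : 'rV[R]_n -> Prop)
    (b : 'I_k -> 'rV[R]_n) : Prop :=
  (forall i, S (b i)) /\
  (forall c : 'I_k -> R, \sum_(i < k) c i *: b i = 0 -> forall i, c i = 0) /\
  (forall x, S x -> exists c : 'I_k -> R, x = \sum_(i < k) c i *: b i).

Definition pseudo_orthonormal (R : realType) (n k : nat) (G : 'M[R]_n)
    (b : 'I_k -> 'rV[R]_n) : Prop :=
  (forall i j, i != j -> ipform G (b i) (b j) = 0) /\
  (forall i, ipform G (b i) (b i) = 1 \/ ipform G (b i) (b i) = -1).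

Definition quadratic_form_on (R : realType) (n : nat) (S : 'rV[R]_n -> Prop)
    (phi : 'rV[R]_n -> R) : Prop :=
  exists Q : 'M[R]_n, forall z, S z -> phi z = ipform Q z z.

Definition polar (R : realType) (n : nat) (phi : 'rV[R]_n -> R) (z z' : 'rV[R]_n) : R :=
  (phi (z + z') - phi z - phi z') / 2.

Definition is_j_map (R : realType) (n : nat)
    (br : 'rV[R]_n -> 'rV[R]_n -> 'rV[R]_n) (G : 'M[R]_n)
    (j : 'rV[R]_n -> 'rV[R]_n -> 'rV[R]_n) : Prop :=
  forall z, center br z -> forall x, vpart br G x ->
    vpart br G (j z x) /\
    (forall y, vpart br G y -> ipform G (br x y) z = ipform G y (j z x)).

Definition modified_H_type (R : realType) (n : nat)
    (br : 'rV[R]_n -> 'rV[R]_n -> 'rV[R]_n) (G : 'M[R]_n)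
    (j : 'rV[R]_n -> 'rV[R]_n -> 'rV[R]_n) (phi : 'rV[R]_n -> R) : Prop :=
  forall z, center br z -> forall x, vpart br G x -> j z (j z x) = - (phi z) *: x.

Definition ebase {R : realType} {n : nat} (i : 'I_n) : 'rV[R]_n := delta_mx 0 i.

(* Levi-Civita connection on left-invariant fields, via the Koszul formula
   2<nabla_x y, w> = <[x,y],w> - <[y,w],x> + <[w,x],y> *)
Definition levi_civita (R : realType) (n : nat)
    (br : 'rV[R]_n -> 'rV[R]_n -> 'rV[R]_n) (G : 'M[R]_n) (x y : 'rV[R]_n) : 'rV[R]_n :=
  (\row_(i < n) ((ipform G (br x y) (ebase i) - ipform G (br y (ebase i)) x
                 + ipform G (br (ebase i) x) y) / 2)) *m invmx G.

Definition curv (R : realType) (n : nat)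
    (br : 'rV[R]_n -> 'rV[R]_n -> 'rV[R]_n) (G : 'M[R]_n) (x y w : 'rV[R]_n) : 'rV[R]_n :=
  levi_civita br G x (levi_civita br G y w) - levi_civita br G y (levi_civita br G x w)
  - levi_civita br G (br x y) w.

Definition ricci (R : realType) (n : nat)
    (br : 'rV[R]_n -> 'rV[R]_n -> 'rV[R]_n) (G : 'M[R]_n) (x y : 'rV[R]_n) : R :=
  \sum_(i < n) (curv br G (ebase i) x y) 0 i.

(* Let zproj be the orthogonal projection onto the centre z, computed in the
   pseudo-orthonormal basis (z_k) with signs eps_k = <z_k, z_k>, and vproj = 1 - zproj
   the projection onto v.  Extending j to the bilinear map J x y = j (zproj x) (vproj y)
   gives <J x y, w> = <[y, w], x>, so the Koszul formula becomes
   nabla_x y = ([x, y] - J x y - J y x) / 2.  In each case w |-> R(w, x) y is then an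
   explicit combination of brackets and J's, and its trace follows from three facts:
   J c is skew-adjoint, hence traceless; a map f with values in z has trace
   sum_k eps_k <f z_k, z_k> (tr (h o f) = tr (f o h) reduces the remaining terms to
   this); and polarising J z o J z = - phi z vproj gives
   tr (J z o J z') = - <z, z'>_phi tr vproj, where tr vproj = n - p = m. *)

From HB Require Import structures.
From mathcomp Require Import all_boot all_order all_algebra.
From mathcomp Require Import reals sesquilinear ring lra.
Import Order.TTheory GRing.Theory Num.Theory.
Local Open Scope ring_scope.
Set Implicit Arguments. Unset Strict Implicit. Unset Printing Implicit Defensive.

Section Trace.
Variables (R : fieldType) (n : nat).
Implicit Types (f g : 'rV[R]_n -> 'rV[R]_n) (u w : 'rV[R]_n).

Definition trace f := \tr (lin1_mx f).

Lemma traceE f : trace f = \sum_i f (delta_mx 0 i) 0 i.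
Proof. by apply: eq_bigr => i _; rewrite mxE. Qed.

Lemma eq_trace f g : f =1 g -> trace f = trace g.
Proof. by move=> fg; rewrite !traceE; apply: eq_bigr => i _; rewrite fg. Qed.

Lemma traceD f g : trace (fun w => f w + g w) = trace f + trace g.
Proof. by rewrite !traceE -big_split; apply: eq_bigr => i _; rewrite mxE. Qed.

Lemma traceZ a f : trace (fun w => a *: f w) = a * trace f.
Proof. by rewrite !traceE mulr_sumr; apply: eq_bigr => i _; rewrite mxE. Qed.

Lemma traceN f : trace (fun w => - f w) = - trace f.
Proof. by rewrite !traceE -sumrN; apply: eq_bigr => i _; rewrite mxE. Qed.

Lemma traceB f g : trace (fun w => f w - g w) = trace f - trace g.
Proof. by rewrite traceD traceN. Qed.

Lemma trace_sum I (r : seq I) (F : I -> 'rV[R]_n -> 'rV[R]_n) :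
  trace (fun w => \sum_(k <- r) F k w) = \sum_(k <- r) trace (F k).
Proof.
rewrite traceE; under eq_bigr do rewrite summxE.
by rewrite exchange_big; apply: eq_bigr => k _; rewrite traceE.
Qed.

Lemma trace_id : trace id = n%:R.
Proof.
rewrite traceE (eq_bigr (fun _ => 1)) ?sumr_const ?card_ord // => i _.
by rewrite mxE !eqxx.
Qed.

Lemma mul_rV_lin1_linear f : linear f -> forall u, u *m lin1_mx f = f u.
Proof.
move=> lf; exact: (mul_rV_lin1 (HB.pack f (GRing.isLinear.Build _ _ _ _ f lf))).
Qed.

Lemma lin1_mx_comp f g : linear f -> linear g ->
  lin1_mx (f \o g) = lin1_mx g *m lin1_mx f.
Proof.
move=> lf lg; have lfg : linear (f \o g) by move=> a u w; rewrite /= lg lf.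
apply/row_matrixP => i; rewrite !rowE mulmxA.
by rewrite (mul_rV_lin1_linear lfg) (mul_rV_lin1_linear lg) (mul_rV_lin1_linear lf).
Qed.

Lemma trace_comp_comm f g : linear f -> linear g -> trace (f \o g) = trace (g \o f).
Proof.
by move=> lf lg; rewrite /trace (lin1_mx_comp lf lg) (lin1_mx_comp lg lf) mxtrace_mulC.
Qed.

Lemma trace_rank1 (phi : 'rV[R]_n -> R) b : scalar phi ->
  trace (fun w => phi w *: b) = phi b.
Proof.
move=> lphi; have phiE w : phi w = \sum_i w 0 i * phi (delta_mx 0 i).
  rewrite {1}(row_sum_delta w); elim/big_rec2: _ => [|i x y _ <-].
    by move: (lphi (-1) 0 0); rewrite scaler0 addr0 mulN1r addNr.
  by rewrite lphi.
by rewrite traceE phiE; apply: eq_bigr => i _; rewrite mxE mulrC.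
Qed.

End Trace.

Lemma free_spanning_rows_dim (F : fieldType) k n (B : 'M[F]_(k, n)) :
  (forall c : 'rV_k, c *m B = 0 -> c = 0) ->
  (forall x : 'rV_n, exists c : 'rV_k, x = c *m B) -> k = n.
Proof.
move=> B_free B_span.
have fB : row_free B.
  rewrite -kermx_eq0; apply/eqP/row_matrixP => i; rewrite row0.
  by apply: B_free; apply/sub_kermxP; apply: row_sub.
have uB : row_full B.
  rewrite -sub1mx; apply/row_subP => i.
  by have [c ->] := B_span (row i 1%:M); apply: submxMl.
move: fB uB; rewrite -row_leq_rank -col_leq_rank => kB nB.
by apply/eqP; rewrite eqn_leq (leq_trans kB (rank_leq_col B)) (leq_trans nB (rank_leq_row B)).
Qed.

Section Form.
Variables (R : realType) (n : nat) (G : 'M[R]_n).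

Lemma ipform_is_bilinear : bilinear_for
  (GRing.Scale.Law.clone _ _ ( *%R ) _) (GRing.Scale.Law.clone _ _ ( *%R ) _) (ipform G).
Proof.
split=> [u|u] a x y; rewrite /ipform.
- by rewrite !mulmxDl -!scalemxAl !mxE.
- by rewrite linearP /= !mulmxDr -!scalemxAr !mxE.
Qed.

HB.instance Definition _ := bilinear_isBilinear.Build R _ _ _
  (GRing.Scale.Law.clone _ _ ( *%R ) _) (GRing.Scale.Law.clone _ _ ( *%R ) _)
  (ipform G) ipform_is_bilinear.

Lemma ipform_delta u i : ipform G u (delta_mx 0 i) = (u *m G) 0 i.
Proof.
rewrite /ipform mxE (bigD1 i) //= big1 ?addr0 => [|k /negbTE ki].
  by rewrite !mxE !eqxx mulr1.
by rewrite !mxE ki andbF mulr0.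
Qed.

Hypothesis G_sym : G^T = G.

Lemma ipformC x y : ipform G x y = ipform G y x.
Proof.
rewrite /ipform -[in LHS](trmxK (x *m G *m y^T)) [in LHS]mxE.
by rewrite !trmx_mul trmxK G_sym mulmxA.
Qed.

Hypothesis G_unit : G \in unitmx.

Lemma ipform_nondeg u : (forall w, ipform G u w = 0) -> u = 0.
Proof.
move=> u0; have uG0 : u *m G = 0 by apply/rowP => i; rewrite -ipform_delta u0 mxE.
by rewrite -(mulmxK G_unit u) uG0 mul0mx.
Qed.

(* With [M] the matrix of [f], [M *m G] is antisymmetric, so
   [\tr M = \tr (G^-1 *m (M *m G)^T) = - \tr M]. *)
Lemma trace_skew f : linear f ->
  (forall u w, ipform G (f u) w = - ipform G u (f w)) -> trace f = 0.
Proof.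
move=> lf f_skew.
have MGE a b : (lin1_mx f *m G) a b = ipform G (f (delta_mx 0 a)) (delta_mx 0 b).
  by rewrite ipform_delta -(mul_rV_lin1_linear lf) -mulmxA -rowE [RHS]mxE.
have MG_anti : (lin1_mx f *m G)^T = - (lin1_mx f *m G).
  by apply/matrixP => a b; rewrite mxE [in RHS]mxE !MGE f_skew ipformC.
have MGK : lin1_mx f = lin1_mx f *m G *m invmx G by rewrite mulmxK.
have : trace f = - trace f.
  rewrite /trace {1}MGK -mxtrace_tr trmx_mul MG_anti trmx_inv G_sym mulmxN raddfN /=.
  by rewrite mxtrace_mulC -MGK.
lra.
Qed.

End Form.

Section PseudoOrthonormalProjection.
Variables (R : realType) (n p : nat) (G : 'M[R]_n) (zb : 'I_p -> 'rV[R]_n).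
Hypothesis zb_orth : forall k l, k != l -> ipform G (zb k) (zb l) = 0.
Hypothesis zb_norm : forall k,
  ipform G (zb k) (zb k) = 1 \/ ipform G (zb k) (zb k) = -1.

Local Notation eps k := (ipform G (zb k) (zb k)).

Lemma eps_sqr k : eps k * eps k = 1.
Proof. by case: (zb_norm k) => ->; rewrite ?mulr1 ?mulrNN ?mulr1. Qed.

Definition zproj x := \sum_(k < p) (eps k * ipform G x (zb k)) *: zb k.

Lemma zproj_is_linear : linear zproj.
Proof.
move=> a x y; rewrite /zproj scaler_sumr -big_split; apply: eq_bigr => k _ /=.
by rewrite linearPl /= scalerA -scalerDl mulrDr mulrCA.
Qed.

HB.instance Definition _ :=
  GRing.isLinear.Build R _ _ _ zproj zproj_is_linear.

Lemma ipform_span_basis (c : 'I_p -> R) l :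
  ipform G (\sum_(k < p) c k *: zb k) (zb l) = c l * eps l.
Proof.
rewrite linear_sumlz (bigD1 l) //= big1 ?addr0 => [|k kl]; first by rewrite linearZl.
by rewrite linearZl /= zb_orth ?mulr0.
Qed.

Lemma ipform_zproj_basis x l : ipform G (zproj x) (zb l) = ipform G x (zb l).
Proof. by rewrite ipform_span_basis mulrAC eps_sqr mul1r. Qed.

Lemma zproj_span (c : 'I_p -> R) :
  zproj (\sum_(k < p) c k *: zb k) = \sum_(k < p) c k *: zb k.
Proof.
by apply: eq_bigr => k _; rewrite ipform_span_basis mulrCA eps_sqr mulr1.
Qed.

Lemma span_basis_eq0 (c : 'I_p -> R) :
  \sum_(k < p) c k *: zb k = 0 -> forall k, c k = 0.
Proof.
move=> c0 k; move: (ipform_span_basis c k); rewrite c0 linear0l.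
move/(congr1 ( *%R^~ (eps k))); rewrite -mulrA eps_sqr mulr1 mul0r.
by move<-.
Qed.

Lemma trace_zproj_comp f : linear f ->
  trace (zproj \o f) = \sum_(k < p) eps k * ipform G (f (zb k)) (zb k).
Proof.
move=> lf; rewrite /comp /zproj trace_sum; apply: eq_bigr => k _.
by rewrite trace_rank1 // => a x y; rewrite lf linearPl /= mulrDr mulrCA.
Qed.

End PseudoOrthonormalProjection.

Section ModifiedHType.
Variables (R : realType) (n p : nat) (G : 'M[R]_n) (zb : 'I_p -> 'rV[R]_n).
Variables (br j : 'rV[R]_n -> 'rV[R]_n -> 'rV[R]_n) (phi : 'rV[R]_n -> R).
Hypothesis br_linear : forall (a : R) x y w, br (a *: x + y) w = a *: br x w + br y w.
Hypothesis br_anti : forall x y, br x y = - br y x.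
Hypothesis br_br : forall x y w, br (br x y) w = 0.
Hypothesis G_sym : G^T = G.
Hypothesis G_unit : G \in unitmx.
Hypothesis center_nondeg : nondeg_on (center br) G.
Hypothesis zb_center : forall k, center br (zb k).
Hypothesis zb_span : forall x, center br x ->
  exists c : 'I_p -> R, x = \sum_(k < p) c k *: zb k.
Hypothesis zb_orth : forall k l, k != l -> ipform G (zb k) (zb l) = 0.
Hypothesis zb_norm : forall k,
  ipform G (zb k) (zb k) = 1 \/ ipform G (zb k) (zb k) = -1.
Hypothesis j_map : is_j_map br G j.
Hypothesis j_sqr : modified_H_type br G j phi.

Local Notation ip := (ipform G).
Local Notation cen := (center br).
Local Notation vp := (vpart br G).
Local Notation eps k := (ipform G (zb k) (zb k)).
Local Notation zproj := (zproj G zb).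
Local Notation trace := (@trace _ n).

Lemma br_is_bilinear : bilinear_for
  (GRing.Scale.Law.clone _ _ ( *:%R ) _) (GRing.Scale.Law.clone _ _ ( *:%R ) _) br.
Proof.
split=> [u|u] a x y /=; first exact: br_linear.
by rewrite br_anti br_linear (br_anti x) (br_anti y) scalerN opprD !opprK.
Qed.

HB.instance Definition _ := bilinear_isBilinear.Build R _ _ _
  (GRing.Scale.Law.clone _ _ ( *:%R ) _) (GRing.Scale.Law.clone _ _ ( *:%R ) _)
  br br_is_bilinear.

Definition vproj x := x - zproj x.

Lemma vproj_is_linear : linear vproj.
Proof. by move=> a x y; rewrite /vproj linearP scalerBr addrACA opprD. Qed.

HB.instance Definition _ := GRing.isLinear.Build R _ _ _ vproj vproj_is_linear.

Lemma vproj_add_zproj x : vproj x + zproj x = x.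
Proof. exact: subrK. Qed.

Lemma center_br x y : cen (br x y).
Proof. by move=> w; apply: br_br. Qed.

Lemma br_center_l c x : cen c -> br c x = 0.
Proof. exact. Qed.

Lemma br_center_r x c : cen c -> br x c = 0.
Proof. by move=> cc; rewrite br_anti cc oppr0. Qed.

Lemma center_lin a x y : cen x -> cen y -> cen (a *: x + y).
Proof. by move=> cx cy w; rewrite br_linear cx cy scaler0 addr0. Qed.

Lemma vpart_lin a x y : vp x -> vp y -> vp (a *: x + y).
Proof. by move=> vx vy z cz; rewrite linearPl /= vx // vy // mulr0 addr0. Qed.

Lemma center0 : cen 0.
Proof. exact: linear0l. Qed.

Lemma centerZ a x : cen x -> cen (a *: x).
Proof. by move=> cx w; rewrite linearZl /= cx scaler0. Qed.

Lemma vpartZ a x : vp x -> vp (a *: x).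
Proof. by move=> vx z cz; rewrite linearZl /= vx // mulr0. Qed.

Lemma vpartB x y : vp x -> vp y -> vp (x - y).
Proof. by move=> vx vy z cz; rewrite linearBl /= vx // vy // subrr. Qed.

Lemma ipform_center_vpart c e : cen c -> vp e -> ip c e = 0.
Proof. by move=> cc ve; rewrite ipformC // ve. Qed.

Lemma center_zproj x : cen (zproj x).
Proof.
move=> w; rewrite linear_sumlz big1 // => k _.
by rewrite linearZl /= zb_center scaler0.
Qed.

Lemma zproj_center c : cen c -> zproj c = c.
Proof. by move=> /zb_span[a ->]; rewrite zproj_span. Qed.

Lemma vproj_center c : cen c -> vproj c = 0.
Proof. by move=> cc; rewrite /vproj zproj_center ?subrr. Qed.

Lemma vpart_vproj x : vp (vproj x).
Proof.
move=> z /zb_span[c ->]; rewrite linear_sumr big1 // => k _.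
by rewrite linearZr /= linearBl /= ipform_zproj_basis // subrr mulr0.
Qed.

Lemma zproj_vpart e : vp e -> zproj e = 0.
Proof. by move=> ve; rewrite /zproj big1 // => k _; rewrite ve // mulr0 scale0r. Qed.

Lemma vproj_vpart e : vp e -> vproj e = e.
Proof. by move=> ve; rewrite /vproj zproj_vpart // subr0. Qed.

Lemma br_vproj x y : br x y = br (vproj x) (vproj y).
Proof.
rewrite /vproj linearBl /= !linearBr /= !(center_zproj x _).
by rewrite (br_center_r _ (center_zproj y)) !subr0.
Qed.

Lemma ipform_center_zproj c x : cen c -> ip c x = ip c (zproj x).
Proof.
move=> cc; rewrite -{1}(vproj_add_zproj x) linearDr /=.
by rewrite ipform_center_vpart ?add0r //; apply: vpart_vproj.
Qed.

Lemma vpart_nondeg u : vp u -> (forall y, vp y -> ip u y = 0) -> u = 0.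
Proof.
move=> vu u0; apply: (ipform_nondeg G_unit) => w.
rewrite -(vproj_add_zproj w) linearDr /= (u0 _ (vpart_vproj w)).
by rewrite (vu _ (center_zproj w)) addr0.
Qed.

Lemma vpart_j z x : cen z -> vp x -> vp (j z x).
Proof. by move=> cz vx; case: (j_map cz vx). Qed.

Lemma ipform_j z x y : cen z -> vp x -> vp y -> ip (j z x) y = ip (br x y) z.
Proof. by move=> cz vx vy; case: (j_map cz vx) => _ /(_ y vy) ->; exact: ipformC. Qed.

Lemma j_linear_r z a x y : cen z -> vp x -> vp y ->
  j z (a *: x + y) = a *: j z x + j z y.
Proof.
move=> cz vx vy; have vxy := vpart_lin a vx vy.
apply/subr0_eq/vpart_nondeg => [|t vt].
  by apply: vpartB; [apply: vpart_j | apply: vpart_lin; apply: vpart_j].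
rewrite linearBl linearPl /= (ipform_j cz vxy vt) (ipform_j cz vx vt) (ipform_j cz vy vt).
by rewrite linearPl /= linearPl /= subrr.
Qed.

Lemma j_linear_l z z' a x : cen z -> cen z' -> vp x ->
  j (a *: z + z') x = a *: j z x + j z' x.
Proof.
move=> cz cz' vx; have czz := center_lin a cz cz'.
apply/subr0_eq/vpart_nondeg => [|t vt].
  by apply: vpartB; [apply: vpart_j | apply: vpart_lin; apply: vpart_j].
rewrite linearBl linearPl /= (ipform_j czz vx vt) (ipform_j cz vx vt) (ipform_j cz' vx vt).
by rewrite linearPr /= subrr.
Qed.

Definition J x y := j (zproj x) (vproj y).

Lemma J_is_bilinear : bilinear_for
  (GRing.Scale.Law.clone _ _ ( *:%R ) _) (GRing.Scale.Law.clone _ _ ( *:%R ) _) J.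
Proof.
split=> [u|u] a x y; rewrite /J /= linearP /=.
  by rewrite j_linear_l //; (apply: center_zproj || apply: vpart_vproj).
by rewrite j_linear_r //; (apply: center_zproj || apply: vpart_vproj).
Qed.

HB.instance Definition _ := bilinear_isBilinear.Build R _ _ _
  (GRing.Scale.Law.clone _ _ ( *:%R ) _) (GRing.Scale.Law.clone _ _ ( *:%R ) _)
  J J_is_bilinear.

Lemma vpart_J x y : vp (J x y).
Proof. exact: vpart_j (center_zproj x) (vpart_vproj y). Qed.

Lemma ipform_J x y w : ip (J x y) w = ip (br y w) x.
Proof.
rewrite -{1}(vproj_add_zproj w) linearDr /= (vpart_J x y (center_zproj w)) addr0.
rewrite (ipform_j (center_zproj x) (vpart_vproj y) (vpart_vproj w)) -br_vproj.
by rewrite -ipform_center_zproj //; apply: center_br.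
Qed.

Lemma J_center_l c y : cen c -> J c y = j c (vproj y).
Proof. by move=> cc; rewrite /J zproj_center. Qed.

Lemma J_center_r x c : cen c -> J x c = 0.
Proof.
by move=> cc; transitivity (J x 0); [rewrite /J vproj_center // linear0 | exact: linear0r].
Qed.

Lemma J_vpart_l e y : vp e -> J e y = 0.
Proof.
by move=> ve; transitivity (J 0 y); [rewrite /J zproj_vpart // linear0 | exact: linear0l].
Qed.

Lemma J_sqr z w : cen z -> J z (J z w) = - phi z *: vproj w.
Proof.
move=> cz; rewrite J_center_l // (vproj_vpart (vpart_J z w)) J_center_l //.
exact: j_sqr (vpart_vproj w).
Qed.

Lemma ipform_JJ z a b : cen z -> vp a -> vp b -> ip (J z a) (J z b) = phi z * ip a b.
Proof.
move=> cz va vb; rewrite ipform_J br_anti linearNl /= -ipform_J J_sqr // vproj_vpart //.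
by rewrite linearZl /= ipformC // mulNr opprK.
Qed.

Lemma J_anticomm z z' w : cen z -> cen z' ->
  J z (J z' w) + J z' (J z w) = - (2 * polar phi z z') *: vproj w.
Proof.
move=> cz cz'; have czz : cen (z + z') by move=> t; rewrite linearDl /= cz cz' addr0.
have := J_sqr w czz; rewrite !linearDl !linearDr /= (J_sqr w cz) (J_sqr w cz') => h.
rewrite /polar mulrC divfK ?pnatr_eq0 //.
apply: (addrI (- phi z *: vproj w)); apply: (addIr (- phi z' *: vproj w)).
rewrite addrA -(addrA _ (J z' (J z w))) h -!scalerDl; congr (_ *: _); ring.
Qed.

Local Notation lc := (levi_civita br G).

Lemma levi_civitaE x y : lc x y = 2^-1 *: (br x y - J x y - J y x).
Proof.
rewrite /levi_civita; set v := 2^-1 *: _.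
suff -> : \row_i ((ip (br x y) (ebase i) - ip (br y (ebase i)) x
                   + ip (br (ebase i) x) y) / 2) = v *m G by rewrite mulmxK.
apply/rowP => i; rewrite [LHS]mxE -ipform_delta /ebase linearZl /= !linearBl /=.
by rewrite !ipform_J (br_anti (delta_mx 0 i) x) linearNl mulrC.
Qed.

Lemma levi_civita_center_l c y : cen c -> lc c y = - (2^-1 *: J c y).
Proof.
by move=> cc; rewrite levi_civitaE br_center_l // (J_center_r y cc) sub0r subr0 scalerN.
Qed.

Lemma levi_civita_center_r x c : cen c -> lc x c = - (2^-1 *: J c x).
Proof.
by move=> cc; rewrite levi_civitaE br_center_r // J_center_r // subr0 sub0r scalerN.
Qed.

Lemma levi_civita_vpart_l e y : vp e -> lc e y = 2^-1 *: (br e y - J y e).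
Proof. by move=> ve; rewrite levi_civitaE J_vpart_l // subr0. Qed.

Lemma levi_civita_vpart_r x e : vp e -> lc x e = 2^-1 *: (br x e - J x e).
Proof. by move=> ve; rewrite levi_civitaE (J_vpart_l x ve) subr0. Qed.

Lemma trace_center_valued f : linear f -> (forall w, cen (f w)) ->
  trace f = \sum_(k < p) eps k * ip (f (zb k)) (zb k).
Proof.
move=> lf cf; rewrite -(trace_zproj_comp _ _ lf).
by apply: eq_trace => w; rewrite /= zproj_center.
Qed.

Lemma trace_comp_center_valued h f : linear h -> linear f -> (forall w, cen (f w)) ->
  trace (h \o f) = \sum_(k < p) eps k * ip (f (h (zb k))) (zb k).
Proof.
move=> lh lf cf; rewrite trace_comp_comm //.
by apply: trace_center_valued => [a u w|w]; [rewrite /= lh lf | apply: cf].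
Qed.

Lemma trace_J c : cen c -> trace (J c) = 0.
Proof.
move=> cc; apply: (trace_skew G_sym G_unit) => [a u w|u w]; first by rewrite linearPr.
by rewrite ipform_J [in RHS]ipformC // ipform_J br_anti linearNl.
Qed.

Lemma trace_vproj : trace vproj = n%:R - p%:R.
Proof.
rewrite (traceB id zproj) trace_id; congr (_ - _).
rewrite -[zproj]/(zproj \o id) trace_zproj_comp //.
by rewrite (eq_bigr (fun _ => 1)) ?sumr_const ?card_ord // => k _; rewrite eps_sqr.
Qed.

Lemma curv_vpart_center w e z : vp e -> cen z ->
  curv br G w e z = 4^-1 *: (J w (J z e) - br w (J z e) + br e (J z w)).
Proof.
move=> ve cz; rewrite /curv (levi_civita_center_r e cz) (levi_civita_center_r w cz).
rewrite (levi_civita_center_r _ cz) (J_center_r z (center_br w e)) -!scaleNr.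
rewrite (levi_civita_vpart_r w (vpartZ _ (vpart_J z e))).
rewrite (levi_civita_vpart_r e (vpartZ _ (vpart_J z w))) (J_vpart_l _ ve) !linearZr /=.
by apply/rowP => i; rewrite !mxE; field.
Qed.

Lemma curv_vpart w e e' : vp e -> vp e' ->
  curv br G w e e' =
  4^-1 *: (br e (J w e') + J (br w e') e + 2 *: J (br w e) e' - J (br e e') w).
Proof.
move=> ve ve'; rewrite /curv (levi_civita_vpart_l e' ve) (J_vpart_l e ve') subr0.
rewrite (levi_civita_center_r w (centerZ _ (center_br e e'))) (levi_civita_vpart_r w ve').
rewrite (levi_civita_vpart_l _ ve) (levi_civita_center_l e' (center_br w e)).
rewrite linearZr linearBr /= (br_center_r e (center_br w e')) !linearZl linearBl /=.
rewrite (J_vpart_l e (vpart_J w e')).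
by apply/rowP => i; rewrite !mxE; field.
Qed.

Lemma curv_center w z z' : cen z -> cen z' ->
  curv br G w z z' = - (4^-1 *: J z (J z' w)).
Proof.
move=> cz cz'; rewrite /curv (levi_civita_center_r z cz') (J_center_r z' cz) scaler0 oppr0.
rewrite (levi_civita_center_r w center0) (levi_civita_center_r w cz').
rewrite (levi_civita_center_l _ cz) (br_center_r w cz) (levi_civita_center_l z' center0).
rewrite !linear0l linearNr linearZr /=.
by apply/rowP => i; rewrite !mxE; field.
Qed.

Local Notation xi := (\sum_(k < p) eps k * phi (zb k)).

Lemma sum_eps_phi (F : 'I_p -> R) X : (forall k, F k = phi (zb k) * X) ->
  \sum_(k < p) eps k * F k = xi * X.
Proof. by move=> FE; rewrite mulr_suml; apply: eq_bigr => k _; rewrite FE mulrA. Qed.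

Lemma ricciE x y : ricci br G x y = trace (fun w => curv br G w x y).
Proof. by rewrite traceE. Qed.

Lemma ricci_vpart_center e z : vp e -> cen z -> ricci br G e z = 0.
Proof.
move=> ve cz; rewrite ricciE (eq_trace (fun w => curv_vpart_center w ve cz)).
rewrite traceZ !traceD traceN.
have trJ : trace (fun w => J w (J z e)) = 0.
  have -> : trace (fun w => J w (J z e)) = trace ((J^~ (J z e)) \o zproj).
    by apply: eq_trace => w; rewrite /= /J (zproj_center (center_zproj w)).
  rewrite trace_comp_center_valued => [||a x y|]; last exact: center_zproj.
  - by rewrite big1 // => k _; rewrite zproj_vpart ?linear0l ?mulr0 //; apply: vpart_J.
  - by move=> a x y; rewrite linearPl.
  - exact: linearP.
have trb : trace (fun w => br w (J z e)) = 0.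
  rewrite trace_center_valued => [||w]; last exact: center_br.
  - by rewrite big1 // => k _; rewrite br_center_l ?zb_center // linear0l mulr0.
  - by move=> a x y; rewrite linearPl.
have trb' : trace (fun w => br e (J z w)) = 0.
  rewrite trace_center_valued => [||w]; last exact: center_br.
  - by rewrite big1 // => k _; rewrite J_center_r ?zb_center // linear0r linear0l mulr0.
  - by move=> a x y; rewrite !linearPr.
by rewrite trJ trb trb' oppr0 !add0r mulr0.
Qed.

Lemma ricci_vpart e e' : vp e -> vp e' -> ricci br G e e' = - (xi / 2) * ip e e'.
Proof.
move=> ve ve'; rewrite ricciE (eq_trace (fun w => curv_vpart w ve ve')).
rewrite traceZ traceB !traceD traceZ (trace_J (center_br e e')).
have trb : trace (fun w => br e (J w e')) = xi * ip e e'.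
  rewrite trace_center_valued => [||w]; last exact: center_br.
  - apply: sum_eps_phi => k; rewrite -ipform_J ipform_JJ //; exact: zb_center.
  - by move=> a x y; rewrite linearPl linearPr.
have trJb x y : vp x -> vp y -> trace (fun w => J (br w y) x) = - (xi * ip x y).
  move=> vx vy; rewrite -mulrN.
  rewrite (@trace_comp_center_valued (J^~ x) (br^~ y)) => [|a u v|a u v|w];
    [|by rewrite linearPl|by rewrite linearPl|exact: center_br].
  apply: sum_eps_phi => k; rewrite -ipform_J J_sqr ?zb_center // vproj_vpart //.
  by rewrite linearZl /= mulNr mulrN.
rewrite trb !trJb // (ipformC G_sym e').
by field.
Qed.

Lemma ricci_center z z' : cen z -> cen z' ->
  ricci br G z z' = (n%:R - p%:R) / 4 * polar phi z z'.
Proof.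
move=> cz cz'; rewrite ricciE (eq_trace (fun w => curv_center w cz cz')) traceN traceZ.
have lJ c : linear (J c) by move=> a u v; rewrite linearPr.
have tr_sum : trace (J z \o J z') + trace (J z' \o J z) =
              - (2 * polar phi z z') * (n%:R - p%:R).
  by rewrite -traceD (eq_trace (fun w => J_anticomm w cz cz')) traceZ trace_vproj.
rewrite (trace_comp_comm (lJ z') (lJ z)) in tr_sum.
change (trace (fun w => J z (J z' w))) with (trace (J z \o J z')).
set T := trace (J z \o J z') in tr_sum *.
have -> : T = (T + T) / 2 by field.
by rewrite tr_sum; field.
Qed.

Lemma center_vpart_eq0 c : cen c -> vp c -> c = 0.
Proof. by move=> cc vc; apply: center_nondeg. Qed.

Lemma dim_center_vpart m (vb : 'I_m -> 'rV[R]_n) : is_basis_of vp vb -> n = (p + m)%N.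
Proof.
case=> vb_vpart [vb_free vb_span].
pose B : 'M_(p + m, n) := col_mx (\matrix_k zb k) (\matrix_a vb a).
have mulB c : c *m B = \sum_k lsubmx c 0 k *: zb k + \sum_a rsubmx c 0 a *: vb a.
  rewrite -{1}(hsubmxK c) mul_row_col !mulmx_sum_row.
  by congr (_ + _); apply: eq_bigr => i _; rewrite rowK.
have vpart_span (d : 'I_m -> R) : vp (\sum_a d a *: vb a).
  by elim/big_rec: _ => [z _|a x _ vx]; [rewrite linear0l | apply: vpart_lin].
apply/esym/(@free_spanning_rows_dim _ _ _ B) => [c|x].
  rewrite mulB => /eqP; rewrite addr_eq0 => /eqP zE.
  have z0 : \sum_k lsubmx c 0 k *: zb k = 0.
    apply: center_vpart_eq0.
      by rewrite -(zproj_span zb_orth zb_norm); apply: center_zproj.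
    by rewrite zE -scaleN1r; apply: vpartZ.
  have l0 := span_basis_eq0 zb_orth zb_norm z0.
  have /vb_free r0 : \sum_a rsubmx c 0 a *: vb a = 0 by rewrite -[LHS]opprK -zE z0 oppr0.
  have lE : lsubmx c = 0 by apply/rowP => k; rewrite l0 mxE.
  have rE : rsubmx c = 0 by apply/rowP => a; rewrite r0 mxE.
  by rewrite -(hsubmxK c) lE rE row_mx0.
have [d dE] := vb_span _ (vpart_vproj x).
exists (row_mx (\row_k (eps k * ip x (zb k))) (\row_a d a)).
rewrite mulB row_mxKl row_mxKr -{1}(vproj_add_zproj x) addrC dE.
by congr (_ + _); apply: eq_bigr => i _; rewrite mxE.
Qed.

End ModifiedHType.

Theorem theorem3p4 (R : realType) (n : nat)
    (br : 'rV[R]_n -> 'rV[R]_n -> 'rV[R]_n) (G : 'M[R]_n)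
    (j : 'rV[R]_n -> 'rV[R]_n -> 'rV[R]_n) (phi : 'rV[R]_n -> R)
    (p m : nat) (zb : 'I_p -> 'rV[R]_n) (vb : 'I_m -> 'rV[R]_n) :
  is_lie_bracket br -> two_step br ->
  inner_product G -> nondeg_on (center br) G ->
  quadratic_form_on (center br) phi ->
  is_j_map br G j -> modified_H_type br G j phi ->
  is_basis_of (center br) zb -> pseudo_orthonormal G zb ->
  is_basis_of (vpart br G) vb ->
  let xi := \sum_(k < p) ipform G (zb k) (zb k) * phi (zb k) in
  forall e e' z z', vpart br G e -> vpart br G e' -> center br z -> center br z' ->
    [/\ ricci br G e z = 0,
        ricci br G e e' = - (xi / 2) * ipform G e e'
      & ricci br G z z' = (m%:R / 4) * polar phi z z'].
Proof.
move=> [br_linear [br_anti _]] [br_br _] [G_sym G_unit] center_nondeg _ j_map j_sqr.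
move=> [zb_center [_ zb_span]] [zb_orth zb_norm] vb_basis xi e e' z z' ve ve' cz cz'.
have dim := dim_center_vpart br_linear br_anti center_nondeg
              zb_center zb_span zb_orth zb_norm vb_basis.
split; first by apply: (ricci_vpart_center (j := j)).
  by apply: (ricci_vpart (j := j)).
rewrite (ricci_center (j := j) (zb := zb) (phi := phi)) //; congr (_ / 4 * _).
by rewrite [in LHS]dim natrD addrAC subrr add0r.
Qed.
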